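(* Let $(X,d)$ be a sequentially right $K$-complete quasi-pseudometric space and $\varphi:X\to\mathbb{R}\cup\{\infty\}$ a proper, bounded below, nearly lower semicontinuous function. For $x\in X$ let $S(x)=\{y\in X:\varphi(y)+d(y,x)\le\varphi(x)\}$. 1. If $T:X\to X$ satisfies $d(Tx,x)+\varphi(Tx)\le\varphi(x)$ for all $x\in X$, then there exists $z\in X$ with $\varphi(Tz)=\varphi(z)$. 2. If $T:X\rightrightarrows X$ is a set-valued mapping with $S(x)\cap Tx\neq\emptyset$ for every $x\in X$, then there exists $z\in X$ with $\varphi(z)\in\varphi(Tz)$.
   Context: A quasi-pseudometric on $X$ is $d:X\times X\to[0,\infty)$ with $d(x,x)=0$ and $d(x,z)\le d(x,y)+d(y,z)$ (no symmetry). Topology $\tau_d$: neighbourhood base at $x$ given by $\{y:d(x,y)<r\}$, $r>0$; $x_n\to x$ iff $d(x,x_n)\to0$. A sequence $(x_n)$ is right $K$-Cauchy if for every $\varepsilon>0$ there is $n_\varepsilon$ with $d(x_{n+k},x_n)<\varepsilon$ for all $n\ge n_\varepsilon$, $k\in\mathbb{N}$; $X$ is sequentially right $K$-complete if every right $K$-Cauchy sequence converges. $\varphi$ is proper if finite somewhere; nearly lower semicontinuous if $\varphi(x)\le\liminf_n\varphi(x_n)$ for every sequence with pairwise distinct terms converging to $x$. *)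

From HB Require Import structures.
From mathcomp Require Import all_boot all_order all_algebra.
From mathcomp Require Import all_classical all_reals all_analysis.
Set Implicit Arguments. Unset Strict Implicit. Unset Printing Implicit Defensive.
Import Order.TTheory GRing.Theory Num.Theory.
Import numFieldTopology.Exports numFieldNormedType.Exports.
Local Open Scope classical_set_scope.
Local Open Scope ring_scope.

Section QPM.
Variables (R : realType) (X : Type).

Definition quasi_pseudometric (d : X -> X -> R) : Prop :=
  (forall x y, 0 <= d x y) /\ (forall x, d x x = 0) /\
  (forall x y z, d x z <= d x y + d y z).

Definition qconv (d : X -> X -> R) (u : nat -> X) (x : X) : Prop :=
  (fun n => d x (u n)) @ \oo --> (0 : R).

Definition right_K_Cauchy (d : X -> X -> R) (u : nat -> X) : Prop :=
  forall eps : R, 0 < eps -> exists N : nat,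
    forall n k : nat, (N <= n)%N -> d (u (n + k)%N) (u n) < eps.

Definition seq_right_K_complete (d : X -> X -> R) : Prop :=
  forall u : nat -> X, right_K_Cauchy d u -> exists x, qconv d u x.

(* phi : X -> R \cup {+oo} is modelled as phi : X -> \bar R never -oo *)
Definition no_minfty (phi : X -> \bar R) : Prop := forall x, phi x != -oo%E.

Definition proper_fun (phi : X -> \bar R) : Prop := exists x, phi x != +oo%E.

Definition bounded_below (phi : X -> \bar R) : Prop :=
  exists m : R, forall x, (m%:E <= phi x)%E.

Definition nearly_lsc (d : X -> X -> R) (phi : X -> \bar R) : Prop :=
  forall (u : nat -> X) (x : X), injective u -> qconv d u x ->
    (phi x <= limn_einf (fun n => phi (u n)))%E.

Definition Sset (d : X -> X -> R) (phi : X -> \bar R) (x : X) : set X :=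
  [set y | (phi y + (d y x)%:E <= phi x)%E].

End QPM.

From HB Require Import structures.
From mathcomp Require Import all_boot all_order all_algebra.
From mathcomp Require Import all_classical all_reals all_analysis.
From mathcomp Require Import lra.
Set Implicit Arguments. Unset Strict Implicit. Unset Printing Implicit Defensive.
Import Order.TTheory GRing.Theory Num.Theory.
Import numFieldTopology.Exports numFieldNormedType.Exports.
Local Open Scope classical_set_scope.
Local Open Scope ring_scope.

(* Both parts follow from a weak Ekeland principle: some z with phi z finite
   satisfies phi y = phi z for every y in S(z).  Otherwise every point has a
   strict descent inside S, and choosing x_{n+1} in S(x_n) below the midpoint
   of phi(x_n) and inf phi(S(x_n)) halves the gap phi(x_n) - inf phi(S(x_n)),
   which bounds d(x_{n+k}, x_n).  The sequence is right K-Cauchy and injective;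
   its limit lies in every S(x_n) by near lower semicontinuity, so its own
   strict descent sits below every inf phi(S(x_n)), contradicting gap -> 0. *)

Lemma halving_eventually_lt (R : realType) (g : nat -> R) :
  (forall n, 0 <= g n) -> (forall n, g n.+1 <= g n / 2) ->
  forall eps, 0 < eps -> exists N, forall n, (N <= n)%N -> g n < eps.
Proof.
move=> g_ge0 g_halve eps eps_gt0.
have g_pow n : g n * 2 ^+ n <= g 0%N.
  elim: n => [|n IH]; first by rewrite expr0 mulr1.
  apply: le_trans IH; rewrite exprS mulrA ler_wpM2r ?exprn_ge0 //.
  by have := g_halve n; lra.
exists (Num.Def.truncn (g 0%N / eps)) => n Nn.
have lt_n1 : g 0%N < eps * n.+1%:R.
  rewrite mulrC -ltr_pdivrMr //.
  by apply: lt_le_trans (truncnS_gt _) _; rewrite ler_nat ltnS.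
have n1_le_pow : n.+1%:R <= (2 : R) ^+ n by rewrite -natrX ler_nat ltn_expl.
rewrite ltNge; apply/negP => eps_le.
have : eps * n.+1%:R <= g n * 2 ^+ n by apply: ler_pM => //; lra.
by have := g_pow n; lra.
Qed.

Lemma limn_einf_le_add_cvg0 (R : realType) (u : nat -> \bar R) (v : nat -> R)
    (c : R) (n : nat) :
  v @ \oo --> (0 : R) -> (forall m, (n <= m)%N -> (u m <= (c + v m)%:E)%E) ->
  (limn_einf u <= c%:E)%E.
Proof.
move=> v0 u_le.
rewrite limn_einf_lim; have /cvg_lim -> // := @cvg_einfs_sup _ u.
apply: ge_ereal_sup => _ [N _ <-].
apply/lee_addgt0Pr => e e_gt0.
move/cvgrPdist_lt: v0 => /(_ e e_gt0) [M _ vM].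
pose m := maxn (maxn N M) n.
have := vM m; rewrite /= sub0r normrN /m !leq_max leqnn orbT.
move=> /(_ isT) /ltW /ler_normlP [_ vm_le].
apply: (@le_trans _ _ (u m)).
  by apply: ereal_inf_lbound; exists m => //=; rewrite /m !leq_max leqnn.
apply: (le_trans (u_le m _)); first by rewrite /m leq_max leqnn orbT.
by rewrite -EFinD lee_fin lerD2l.
Qed.

Section Sset_descent.
Variables (R : realType) (X : Type) (d : X -> X -> R) (phi : X -> \bar R).
Hypothesis d_refl : forall x, d x x = 0.
Hypothesis d_triangle : forall x y z, d x z <= d x y + d y z.
Hypothesis phi_nmy : no_minfty phi.

Local Notation S := (Sset d phi).
Local Notation f x := (fine (phi x)).

Lemma SsetE z : phi z \is a fin_num -> forall y,
  S z y <-> phi y \is a fin_num /\ f y + d y z <= f z.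
Proof.
move=> /fineK zE y; rewrite /Sset /= -zE; case Ey: (phi y) => [r| |] /=.
- by rewrite -EFinD lee_fin; split; [move=> h; split | case].
- by split => [|[]] //; rewrite addye.
- by move: (phi_nmy y); rewrite Ey.
Qed.

Lemma Sset_refl z : phi z \is a fin_num -> S z z.
Proof. by move=> zf; apply/SsetE => //; rewrite d_refl addr0. Qed.

Lemma Sset_fin_num z y : phi z \is a fin_num -> S z y -> phi y \is a fin_num.
Proof. by move=> zf /(SsetE zf) []. Qed.

Lemma Sset_trans z y w : phi z \is a fin_num -> S z y -> S y w -> S z w.
Proof.
move=> zf /(SsetE zf) [yf Szy] /(SsetE yf) [wf Syw].
by apply/SsetE => //; split => //; have := d_triangle w y z; lra.
Qed.

Section Strict_descent.
Hypothesis d_ge0 : forall x y, 0 <= d x y.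
Variable lb : R.
Hypothesis phi_ge_lb : forall x, (lb%:E <= phi x)%E.
Hypothesis strict_descent : forall z, phi z \is a fin_num ->
  exists2 y, S z y & f y < f z.

Definition Sset_inf z := inf ([set f y | y in S z]).

Lemma Sset_inf_le z y : phi z \is a fin_num -> S z y -> Sset_inf z <= f y.
Proof.
move=> zf Szy; apply: ge_inf; last by exists y.
exists lb => _ [w Szw <-] /=.
by have := phi_ge_lb w; rewrite -(fineK (Sset_fin_num zf Szw)) lee_fin.
Qed.

Lemma Sset_inf_lt z : phi z \is a fin_num -> Sset_inf z < f z.
Proof.
move=> zf; have [y Szy lt_yz] := strict_descent zf.
exact: le_lt_trans (Sset_inf_le zf Szy) lt_yz.
Qed.

Lemma le_Sset_inf z y : phi z \is a fin_num -> S z y -> Sset_inf z <= Sset_inf y.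
Proof.
move=> zf Szy; have yf := Sset_fin_num zf Szy.
apply: lb_le_inf; first by exists (f y), y => //; apply: Sset_refl.
move=> _ [w Syw <-]; apply: (Sset_inf_le zf).
exact: Sset_trans zf Szy Syw.
Qed.

Lemma exists_Sset_below_midpoint z : phi z \is a fin_num ->
  exists2 y, S z y & f y < (Sset_inf z + f z) / 2.
Proof.
move=> zf; have lt_inf := Sset_inf_lt zf.
have S_nonempty : [set f y | y in S z] !=set0 by exists (f z), z => //; apply: Sset_refl.
have lt_mid : Sset_inf z < (Sset_inf z + f z) / 2 by lra.
have [_ [y Szy <-] lt_y] := inf_lt S_nonempty lt_mid.
by exists y.
Qed.

Lemma exists_midpoint_sequence x0 : phi x0 \is a fin_num ->
  exists x : nat -> X, forall n, [/\ phi (x n) \is a fin_num, S (x n) (x n.+1)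
    & f (x n.+1) < (Sset_inf (x n) + f (x n)) / 2].
Proof.
move=> x0f.
have next_ex z : exists y, phi z \is a fin_num ->
    S z y /\ f y < (Sset_inf z + f z) / 2.
  have [zf|] := boolP (phi z \is a fin_num); last by exists z.
  by have [y Szy lt_y] := exists_Sset_below_midpoint zf; exists y.
have [next next_spec] := choice next_ex.
pose x n := iter n next x0.
have xf n : phi (x n) \is a fin_num.
  elim: n => [|n IH] //=; exact: Sset_fin_num IH (next_spec _ IH).1.
by exists x => n; have [] := next_spec _ (xf n).
Qed.

Section Midpoint_sequence.
Variable x : nat -> X.
Hypothesis x_spec : forall n, [/\ phi (x n) \is a fin_num, S (x n) (x n.+1)
  & f (x n.+1) < (Sset_inf (x n) + f (x n)) / 2].

Let xf n : phi (x n) \is a fin_num. Proof. by have [] := x_spec n. Qed.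

Lemma Sset_midpoint_sequence n k : (n <= k)%N -> S (x n) (x k).
Proof.
move=> /subnKC <-; elim: (k - n)%N => [|j IH]; first by rewrite addn0; apply: Sset_refl.
by rewrite addnS; apply: Sset_trans (xf n) IH _; have [] := x_spec (n + j).
Qed.

Definition Sset_gap n := f (x n) - Sset_inf (x n).

Lemma Sset_gap_ge0 n : 0 <= Sset_gap n.
Proof. by have := Sset_inf_lt (xf n); rewrite /Sset_gap; lra. Qed.

Lemma Sset_gap_halve n : Sset_gap n.+1 <= Sset_gap n / 2.
Proof.
have [_ Sx lt_x] := x_spec n; have := le_Sset_inf (xf n) Sx.
by rewrite /Sset_gap; lra.
Qed.

Lemma d_midpoint_sequence_le_gap n k : (n <= k)%N -> d (x k) (x n) <= Sset_gap n.
Proof.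
move=> nk; have Sxk := Sset_midpoint_sequence nk.
have /(SsetE (xf n)) [_ le_k] := Sxk.
by have := Sset_inf_le (xf n) Sxk; rewrite /Sset_gap; lra.
Qed.

Lemma Sset_gap_eventually_lt eps : 0 < eps ->
  exists N, forall n, (N <= n)%N -> Sset_gap n < eps.
Proof. exact: halving_eventually_lt Sset_gap_ge0 Sset_gap_halve eps. Qed.

Lemma midpoint_sequence_right_K_Cauchy : right_K_Cauchy d x.
Proof.
move=> eps eps_gt0; have [N gapN] := Sset_gap_eventually_lt eps_gt0.
exists N => n k Nn; apply: le_lt_trans (gapN n Nn).
exact/d_midpoint_sequence_le_gap/leq_addr.
Qed.

Lemma midpoint_sequence_decreasing n k : (n < k)%N -> f (x k) < f (x n).
Proof.
elim: k => // k IH; rewrite ltnS leq_eqVlt => /predU1P [<- | nk].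
  have [_ _ lt_x] := x_spec n; have := Sset_inf_lt (xf n); lra.
have [_ _ lt_x] := x_spec k; have := Sset_inf_lt (xf k); have := IH nk; lra.
Qed.

Lemma midpoint_sequence_inj : injective x.
Proof.
move=> i j eq_ij; apply/eqP; case: ltngtP => // ij;
  by have := midpoint_sequence_decreasing ij; rewrite eq_ij ltxx.
Qed.

Lemma midpoint_sequence_limit_in_Sset xs : nearly_lsc d phi -> qconv d x xs ->
  forall n, S (x n) xs.
Proof.
move=> phi_lsc x_xs n.
have phi_xs_le : (phi xs <= (f (x n) - d xs (x n))%:E)%E.
  apply: le_trans (phi_lsc _ _ midpoint_sequence_inj x_xs) _.
  apply: (limn_einf_le_add_cvg0 (v := fun k => d xs (x k)) (n := n)) => // k nk.
  rewrite -(fineK (xf k)) lee_fin.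
  have /(SsetE (xf n)) [_ le_k] := Sset_midpoint_sequence nk.
  by have := d_triangle xs (x k) (x n); lra.
have xsf : phi xs \is a fin_num.
  rewrite fin_numE phi_nmy /=; apply: contraTN phi_xs_le => /eqP ->.
  by rewrite leye_eq.
apply/(SsetE (xf n)); split => //.
by move: phi_xs_le; rewrite -(fineK xsf) lee_fin; lra.
Qed.

End Midpoint_sequence.

Lemma no_strict_descent : seq_right_K_complete d -> nearly_lsc d phi ->
  forall x0, phi x0 \is a fin_num -> False.
Proof.
move=> d_complete phi_lsc x0 x0f.
have [x x_spec] := exists_midpoint_sequence x0f.
have [xs x_xs] := d_complete _ (midpoint_sequence_right_K_Cauchy x_spec).
have xs_in n := midpoint_sequence_limit_in_Sset x_spec phi_lsc x_xs n.
have [xf0 _ _] := x_spec 0%N.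
have xsf := Sset_fin_num xf0 (xs_in 0%N).
have [y Sy lt_y] := strict_descent xsf.
have descent_gt0 : 0 < f xs - f y by rewrite subr_gt0.
have [N gapN] := Sset_gap_eventually_lt x_spec descent_gt0.
have [xNf _ _] := x_spec N.
have := Sset_inf_le xNf (Sset_trans xNf (xs_in N) Sy).
have /(SsetE xNf) [_ le_xs] := xs_in N.
by have := gapN N (leqnn N); have := d_ge0 xs (x N); rewrite /Sset_gap; lra.
Qed.

End Strict_descent.

End Sset_descent.

Lemma exists_Sset_stationary (R : realType) (X : Type) (d : X -> X -> R)
    (phi : X -> \bar R) :
  quasi_pseudometric d -> seq_right_K_complete d ->
  no_minfty phi -> proper_fun phi -> bounded_below phi -> nearly_lsc d phi ->
  exists2 z, phi z \is a fin_num & forall y, Sset d phi z y -> phi y = phi z.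
Proof.
move=> [d_ge0 [d_refl d_triangle]] d_complete phi_nmy [x0 x0_ny] [lb phi_ge_lb] phi_lsc.
have x0f : phi x0 \is a fin_num by rewrite fin_numE phi_nmy.
apply: contrapT => no_stationary; apply: (no_strict_descent d_refl d_triangle
  phi_nmy d_ge0 phi_ge_lb _ d_complete phi_lsc x0f) => z zf.
have [y Szy phi_yz] : exists2 y, Sset d phi z y & phi y != phi z.
  apply: contrapT => all_eq; apply: no_stationary; exists z => // y Szy.
  by apply/eqP; apply: contrapT => /negP ne; apply: all_eq; exists y.
exists y => //; have /(SsetE d phi_nmy zf) [yf le_yz] := Szy.
rewrite lt_neqAle; apply/andP; split; last by have := d_ge0 y z; lra.
by apply: contra phi_yz => /eqP eq_f; rewrite -(fineK yf) -(fineK zf) eq_f.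
Qed.

Theorem theorem3p7 (R : realType) (X : Type) (d : X -> X -> R) (phi : X -> \bar R) :
  quasi_pseudometric d -> seq_right_K_complete d ->
  no_minfty phi -> proper_fun phi -> bounded_below phi -> nearly_lsc d phi ->
  (forall T : X -> X,
     (forall x, ((d (T x) x)%:E + phi (T x) <= phi x)%E) ->
     exists z, phi (T z) = phi z) /\
  (forall T : X -> set X,
     (forall x, Sset d phi x `&` T x !=set0) ->
     exists z, (phi @` T z) (phi z)).
Proof.
move=> d_qpm d_complete phi_nmy phi_proper phi_lb phi_lsc.
have [z _ z_stationary] :=
  exists_Sset_stationary d_qpm d_complete phi_nmy phi_proper phi_lb phi_lsc.
split => T T_in_S; exists z.
- by apply: z_stationary; rewrite /Sset /= addeC.
- by have [y [Szy Tzy]] := T_in_S z; exists y => //; apply: z_stationary.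
Qed.
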